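(* Let $A$ be an integral domain containing $\mathbb{Q}$ and let $D$ be a locally nilpotent derivation of $A$. Let $a,b,\lambda\in A$ and $\mu\in\ker D$, all nonzero, and suppose $\lambda\, a\, D(b)=\mu\, b\, D(a)$. Then either $D(a)=D(b)=0$, or $\lambda\mu^{-1}$ (an element of the fraction field of $A$) is a positive rational number.
   Context: A derivation $D$ of $A$ is an additive map satisfying $D(ab)=aD(b)+D(a)b$; it is locally nilpotent if for every $a\in A$ there is $n$ with $D^n(a)=0$. $\ker D=\{a\in A: D(a)=0\}$. *)

From HB Require Import structures.
From mathcomp Require Import all_boot all_order all_algebra.
Set Implicit Arguments. Unset Strict Implicit. Unset Printing Implicit Defensive.
Import Order.TTheory GRing.Theory Num.Theory.
Local Open Scope ring_scope.

Definition is_derivation (A : idomainType) (D : A -> A) : Prop :=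
  (forall a b : A, D (a + b) = D a + D b) /\
  (forall a b : A, D (a * b) = a * D b + D a * b).

Definition locally_nilpotent (A : idomainType) (D : A -> A) : Prop :=
  forall a : A, exists n : nat, iter n D a = 0.

(* "A contains Q": every positive integer is invertible in A
   (equivalently, the canonical map Z -> A extends to Q -> A). *)
Definition contains_rat (A : idomainType) : Prop :=
  forall n : nat, (n.+1)%:R \is a @GRing.unit A.

Definition frac_emb (A : idomainType) (x : A) : {fraction A} :=
  @FracField.tofrac A x.

From HB Require Import structures.
From mathcomp Require Import all_boot all_order all_algebra.
Import Order.TTheory GRing.Theory Num.Theory.
Local Open Scope ring_scope.

(* Write deg x = n when D^n x <> 0 = D^(n+1) x.  By the Leibniz rule,
   D^(p+q) (x y) = C(p+q, p) D^p x D^q y  when  deg x = p and deg y = q,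
   so in characteristic zero deg (x y) = deg x + deg y.  If D a and D b are
   not both zero then neither is, and a D b, b D a both have degree
   N = deg a + deg b - 1.  Since D mu = 0, comparing degrees in
   lam (a D b) = mu (b D a) forces deg lam = 0, and applying D^N to both sides
   yields lam C(N, deg a) = mu C(N, deg b). *)

Lemma contains_rat_natr_eq0 (A : idomainType) n :
  contains_rat A -> (n%:R == 0 :> A) = (n == 0)%N.
Proof.
move=> hQ; case: n => [|n]; rewrite ?eqxx //=; apply/negbTE/eqP => n_eq0.
by have := hQ n; rewrite n_eq0 unitr0.
Qed.

Section Derivation.
Set Implicit Arguments.
Unset Strict Implicit.

Variables (A : idomainType) (D : A -> A).
Hypothesis hD : is_derivation D.

Lemma derivation0 : D 0 = 0.
Proof. by apply: (addrI (D 0)); rewrite -(proj1 hD) !addr0. Qed.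

Lemma derivation_sum I (r : seq I) (P : pred I) (F : I -> A) :
  D (\sum_(i <- r | P i) F i) = \sum_(i <- r | P i) D (F i).
Proof. exact: (big_morph D (proj1 hD) derivation0). Qed.

Lemma derivationMn x k : D (x *+ k) = D x *+ k.
Proof. by elim: k => [|k IHk]; rewrite ?derivation0 // !mulrS (proj1 hD) IHk. Qed.

Lemma iter_derivation0 n : iter n D 0 = 0.
Proof. by elim: n => //= n ->; exact: derivation0. Qed.

Lemma iter_derivationM n x y :
  iter n D (x * y) = \sum_(i < n.+1) (iter i D x * iter (n - i) D y) *+ 'C(n, i).
Proof.
elim: n => [|n IHn]; first by rewrite big_ord1 mulr1n.
rewrite iterS IHn derivation_sum.
under eq_bigr do rewrite derivationMn (proj2 hD) -!iterS mulrnDl.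
rewrite big_split /= big_ord_recl [in RHS]big_ord_recl /= !subn0 !bin0.
rewrite [X in _ = _ + X](eq_bigr (fun i : 'I_(n.+1) =>
  (iter i.+1 D x * iter (n - i) D y) *+ 'C(n, i.+1) +
  (iter i.+1 D x * iter (n - i) D y) *+ 'C(n, i))); last first.
  by move=> i _; rewrite binS mulrnDr.
rewrite big_split /= addrA; congr (_ + _).
rewrite big_ord_recr /= bin_small // mulr0n addr0; congr (_ + _).
by apply: eq_bigr => i _; rewrite /bump /= add1n add0n -!iterS subnSK.
Qed.

Lemma iter_derivation_eq0_ge k j x : (k <= j)%N -> iter k D x = 0 -> iter j D x = 0.
Proof. by move=> /subnK <- hx; rewrite iterD hx iter_derivation0. Qed.

Lemma iter_derivationM_top p q x y :
  iter p.+1 D x = 0 -> iter q.+1 D y = 0 ->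
  iter (p + q) D (x * y) = (iter p D x * iter q D y) *+ 'C(p + q, p).
Proof.
move=> hx hy; have lt_p : (p < (p + q).+1)%N by rewrite ltnS leq_addr.
rewrite iter_derivationM (bigD1 (Ordinal lt_p)) //= addKn big1 ?addr0 //.
move=> i /eqP/val_eqP /= ne_ip; have [lt_ip | lt_pi | eq_ip] := ltngtP i p.
- rewrite (iter_derivation_eq0_ge _ hy) ?mulr0 ?mul0rn //.
  by rewrite ltn_subRL ltn_add2r.
- by rewrite (iter_derivation_eq0_ge lt_pi hx) mul0r mul0rn.
- by rewrite eq_ip eqxx in ne_ip.
Qed.

Lemma iter_derivationM_nil p q x y :
  iter p.+1 D x = 0 -> iter q.+1 D y = 0 -> iter (p + q).+1 D (x * y) = 0.
Proof.
move=> hx hy; rewrite iterS iter_derivationM_top // derivationMn (proj2 hD).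
by rewrite -!iterS hx hy mulr0 mul0r addr0 mul0rn.
Qed.

Lemma iter_derivation_kerM c :
  D c = 0 -> forall k z, iter k D (c * z) = c * iter k D z.
Proof.
by move=> hc k z; elim: k => //= k ->; rewrite (proj2 hD) hc mul0r addr0.
Qed.

Definition derivation_degree x n := iter n.+1 D x = 0 /\ iter n D x != 0.

Lemma derivation_degree_unique x m n :
  derivation_degree x m -> derivation_degree x n -> m = n.
Proof.
move=> [xm xm'] [xn xn']; apply/eqP; rewrite eqn_leq.
apply/andP; split; rewrite leqNgt; apply/negP => lt.
- by rewrite (iter_derivation_eq0_ge lt xn) eqxx in xm'.
- by rewrite (iter_derivation_eq0_ge lt xm) eqxx in xn'.
Qed.

Lemma derivation_degreeD x n :
  derivation_degree x n.+1 -> derivation_degree (D x) n.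
Proof. by rewrite /derivation_degree -!iterSr. Qed.

Lemma derivation_degreeM p q x y : contains_rat A ->
  derivation_degree x p -> derivation_degree y q -> derivation_degree (x * y) (p + q).
Proof.
move=> hQ [hx hx'] [hy hy']; split; first exact: iter_derivationM_nil.
rewrite iter_derivationM_top // -mulr_natr !mulf_neq0 //.
by rewrite contains_rat_natr_eq0 // -lt0n bin_gt0 leq_addr.
Qed.

Lemma derivation_degree_kerM c z n : D c = 0 -> c != 0 ->
  derivation_degree z n -> derivation_degree (c * z) n.
Proof.
move=> hc c_neq0 [hz hz']; rewrite /derivation_degree !iter_derivation_kerM //.
by rewrite hz mulr0 mulf_neq0.
Qed.

Lemma locally_nilpotent_degree x :
  locally_nilpotent D -> x != 0 -> exists n, derivation_degree x n.
Proof.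
move=> hLND x_neq0; have ex_k : exists k, iter k D x == 0.
  by have [k hk] := hLND x; exists k; apply/eqP.
case: (ex_minnP ex_k) => -[|m] /eqP hm min_m; first by case/negP: x_neq0; apply/eqP.
exists m; split=> //; apply/eqP => hm'.
by have := min_m m; rewrite hm' eqxx ltnn => /(_ isT).
Qed.

End Derivation.

Lemma ratr_div_int (F : fieldType) (m n : int) :
  n%:~R != 0 :> F -> ratr (m%:~R / n%:~R) = m%:~R / n%:~R :> F.
Proof.
case: (divqP m n) => [| k r _]; first by rewrite eqxx.
rewrite !intrM mulf_eq0 negb_or => /andP [k_neq0 den_neq0].
by rewrite -mulf_div divff // mul1r.
Qed.

Lemma frac_emb_div_ratr (A : idomainType) (x y : A) (m n : nat) :
  contains_rat A -> y != 0 -> (0 < n)%N -> x *+ n = y *+ m ->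
  frac_emb x / frac_emb y = ratr (m%:R / n%:R).
Proof.
move=> hQ y_neq0 n_gt0 exy; have natrE k : k%:R = frac_emb (k%:R : A).
  by rewrite /frac_emb rmorph_nat.
have n_neq0 : n%:R != 0 :> {fraction A}.
  by rewrite natrE tofrac_eq0 contains_rat_natr_eq0 // -lt0n.
rewrite !pmulrn ratr_div_int -?pmulrn //; apply/eqP.
by rewrite eqr_div ?tofrac_eq0 // mulr_natr mulr_natl -!tofracMn exy.
Qed.

Theorem corollary3p4 (A : idomainType) (D : A -> A)
  (hQ : contains_rat A) (hD : is_derivation D) (hLND : locally_nilpotent D)
  (a b lam mu : A)
  (ha : a != 0) (hb : b != 0) (hlam : lam != 0) (hmu : mu != 0)
  (hmuker : D mu = 0)
  (heq : lam * a * D b = mu * b * D a) :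
  (D a = 0 /\ D b = 0) \/
  (exists r : rat, 0 < r /\ frac_emb lam / frac_emb mu = ratr r).
Proof.
have [[|m] deg_a] := locally_nilpotent_degree hLND ha.
  have Da0 : D a = 0 := proj1 deg_a; left; split=> //; apply/eqP.
  by move: heq; rewrite Da0 mulr0 => /eqP; rewrite !mulf_eq0 (negbTE hlam) (negbTE ha).
have [[|n] deg_b] := locally_nilpotent_degree hLND hb.
  have Db0 : D b = 0 := proj1 deg_b; left; split=> //; apply/eqP.
  by move: heq; rewrite Db0 mulr0 => /esym/eqP; rewrite !mulf_eq0 (negbTE hmu) (negbTE hb).
right; rewrite -!mulrA in heq.
have deg_aDb := derivation_degreeM hD hQ deg_a (derivation_degreeD deg_b).
have deg_bDa := derivation_degreeM hD hQ deg_b (derivation_degreeD deg_a).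
rewrite addnC -addSnnS in deg_bDa; set N := (m.+1 + n)%N in deg_aDb deg_bDa *.
have Dlam0 : D lam = 0.
  have [l deg_lam] := locally_nilpotent_degree hLND hlam.
  have := derivation_degreeM hD hQ deg_lam deg_aDb.
  rewrite heq => /(derivation_degree_unique hD (derivation_degree_kerM hD hmuker hmu deg_bDa)).
  by rewrite -{1}[N]add0n => /addIn l0; rewrite -l0 in deg_lam; case: deg_lam.
have e_aDb := iter_derivationM_top hD (proj1 deg_a) (proj1 (derivation_degreeD deg_b)).
have e_bDa := iter_derivationM_top hD (proj1 deg_b) (proj1 (derivation_degreeD deg_a)).
rewrite -iterSr -/N in e_aDb; rewrite -iterSr addnC -addSnnS -/N [X in _ = X *+ _]mulrC in e_bDa.
have := congr1 (iter N D) heq.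
rewrite (iter_derivation_kerM hD Dlam0) (iter_derivation_kerM hD hmuker) e_aDb e_bDa.
rewrite !mulrnAr -!mulrnAl => /(mulIf (mulf_neq0 (proj2 deg_a) (proj2 deg_b))) e_lam_mu.
exists ('C(N, n.+1)%:R / 'C(N, m.+1)%:R); split.
  by rewrite divr_gt0 // ltr0n bin_gt0 /N ?leq_addr // addSnnS leq_addl.
by apply: frac_emb_div_ratr; rewrite ?bin_gt0 ?leq_addr.
Qed.
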